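(* Suppose units arrive in $K$ sequential groups of sizes $n_1,\dots,n_K$ (each even) with $n_{tk}=n_{ck}=n_k/2$ for $k=1,\dots,K$, and the assignment $W=(W_{[1]},\dots,W_{[K]})$ is generated by sequential pair-switching rerandomization (SeqPSRR), assumed to terminate almost surely in every group. Then the difference-in-means estimator $\widehat\tau=\frac{2}{n}\sum_{i=1}^nW_iY_i(1)-\frac2n\sum_{i=1}^n(1-W_i)Y_i(0)$, $n=\sum_kn_k$, satisfies $E(\widehat\tau)=\tau=n^{-1}\sum_{i=1}^n\{Y_i(1)-Y_i(0)\}$.
   Context: Units are indexed so that group $k$ consists of units $n_{1:(k-1)}+1,\dots,n_{1:k}$, where $n_{1:k}=\sum_{l\le k}n_l$; $W_{[k]}$ is the assignment sub-vector of group $k$, with $n_{tk}$ treated and $n_{ck}$ controls. Covariates $X_i\in\mathbb R^p$ are fixed; $S_{XX[k]}$ is the (assumed invertible) sample covariance of the covariates of the first $k$ groups. With earlier groups' assignments fixed, the cumulative Mahalanobis distance of a group-$k$ assignment is $M_k(W_{[k]})=n_{t,1:k}(1-n_{t,1:k}/n_{1:k})(\overline X_{t[1:k]}-\overline X_{c[1:k]})^{\mathrm T}S_{XX[k]}^{-1}(\overline X_{t[1:k]}-\overline X_{c[1:k]})$, where $n_{t,1:k}=\sum_{l\le k}n_{tl}$ and $\overline X_{t[1:k]}$, $\overline X_{c[1:k]}$ are covariate means of treated/control units among the first $k$ groups. SeqPSRR (inputs: positive numbers $s_1,\dots,s_K$, tuning parameter $\gamma\ge0$): set $M_{[0]}=0$;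 for $k=1,\dots,K$: set $a_k=n_k(n_{1:k})^{-1}q_k$, where $q_k$ is the lower $1/s_k$ quantile of a noncentral chi-square distribution with $p$ degrees of freedom and noncentrality parameter $n_{1:(k-1)}n_k^{-1}M_{[k-1]}$; draw $W^{(0)}_{[k]}$ uniformly among group-$k$ assignments with $n_{tk}$ ones; while $M_k(W^{(t)}_{[k]})>a_k$, swap a uniformly chosen treated and a uniformly chosen control unit of group $k$ to get $W^*_{[k]}$ and move to it with probability $\min\{(M_k(W^{(t)}_{[k]})/M_k(W^*_{[k]}))^\gamma,1\}$ (otherwise retry); output the final $W_{[k]}$ and set $M_{[k]}=M_k(W_{[k]})$. *)

From HB Require Import structures.
From mathcomp Require Import all_boot all_order all_algebra.
From mathcomp Require Import all_classical all_reals all_analysis.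
Set Implicit Arguments. Unset Strict Implicit. Unset Printing Implicit Defensive.
Import Order.TTheory GRing.Theory Num.Theory.
Import numFieldNormedType.Exports.
Local Open Scope classical_set_scope.
Local Open Scope ring_scope.

Section SeqPSRR.
Variable R : realType.

Definition chi2_kernel (nu : nat) (t : R) : R :=
  (t `^ (nu%:R / 2 - 1)) * expR (- t / 2).

(* CDF of the central chi-square law with nu d.f. (nu = 0: point mass at 0) *)
Definition chi2_cdf (nu : nat) (x : R) : R :=
  if nu == 0%N then ((0:R) <= x)%R%:R
  else fine (\int[lebesgue_measure]_(t in `[0%R, x]) (chi2_kernel nu t)%:E)
     / fine (\int[lebesgue_measure]_(t in `[0%R, +oo[) (chi2_kernel nu t)%:E).

(* CDF of the noncentral chi-square law with p d.f. and noncentrality lam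
   (Poisson mixture of central chi-squares) *)
Definition ncchi2_cdf (p : nat) (lam x : R) : \bar R :=
  (\sum_(j <oo) (expR (- lam / 2) * (lam / 2) ^+ j / (j`!)%:R
                  * chi2_cdf (p + 2 * j) x)%:E)%E.

(* lower alpha-quantile: inf {x | F(x) >= alpha}  (+oo if the set is empty) *)
Definition ncchi2_lower_quantile (p : nat) (lam alpha : R) : \bar R :=
  ereal_inf [set x%:E | x in [set x : R | (alpha%:E <= ncchi2_cdf p lam x)%E]].

Variables (p : nat) (X : nat -> 'rV[R]_p).

Definition cov (m : nat) : 'M[R]_p :=
  let mu := (m%:R)^-1 *: \sum_(i < m) X i in
  ((m.-1)%:R)^-1 *: \sum_(i < m) ((X i - mu)^T *m (X i - mu)).

Definition mahal (s : seq bool) : R :=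
  let m := size s in
  let nt := count id s in
  let mt := (nt%:R)^-1 *: \sum_(i < m | nth false s i) X i in
  let mc := ((m - nt)%:R)^-1 *: \sum_(i < m | ~~ nth false s i) X i in
  nt%:R * (1 - nt%:R / m%:R) * ((mt - mc) *m invmx (cov m) *m (mt - mc)^T) 0 0.

(* s : assignments of all earlier units; states b : assignments of the
   current group (m units); a : acceptance threshold a_k; gamma : tuning. *)

Definition swapb m (b : m.-tuple bool) (i j : 'I_m) : m.-tuple bool :=
  [tuple if k == i then false else if k == j then true else tnth b k | k < m].

Definition Mk (s : seq bool) m (b : m.-tuple bool) : R := mahal (s ++ b).

Definition acc_prob (gamma Mcur Mnew : R) : R :=
  if Mnew == 0 then 1 else Num.min ((Mcur / Mnew) `^ gamma) 1.

Definition stopped (s : seq bool) (a : \bar R) m (b : m.-tuple bool) : bool :=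
  ((Mk s b)%:E <= a)%E.

(* one step: stop (absorb) if M_k <= a_k, else propose a pair switch of a
   uniformly chosen treated and control unit, accepted w.p. min{(M/M')^gamma,1} where M' is the proposal distance *)
Definition trans (s : seq bool) (a : \bar R) (gamma : R) m
    (b b' : m.-tuple bool) : R :=
  if stopped s a b then (b' == b)%:R else
  let np := (count id b * (m - count id b))%:R in
  \sum_(i < m | tnth b i) \sum_(j < m | ~~ tnth b j)
     np^-1 * ((b' == swapb b i j)%:R * acc_prob gamma (Mk s b) (Mk s (swapb b i j))
             + (b' == b)%:R * (1 - acc_prob gamma (Mk s b) (Mk s (swapb b i j)))).

Definition init m (b : m.-tuple bool) : R :=
  (count id b == m./2)%:R /
  (#|[set b' : m.-tuple bool | count id b' == m./2]|)%:R.

Fixpoint law_at (s : seq bool) (a : \bar R) (gamma : R) m (t : nat)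
    : m.-tuple bool -> R :=
  match t with
  | 0 => @init m
  | t'.+1 => fun b' => \sum_(b : m.-tuple bool) law_at s a gamma t' b * trans s a gamma b b'
  end.

Definition output_law (s : seq bool) (a : \bar R) (gamma : R) m
    (b : m.-tuple bool) : R :=
  limn (fun t => (stopped s a b)%:R * law_at s a gamma t b).

(* groups are 0-indexed: group k has size nth 0%N ns k *)
Variables (ns : seq nat) (svec : nat -> R) (gamma : R).

Definition cum (k : nat) : nat := \sum_(l < k) nth 0%N ns l.

(* M_[k-1] computed from the assignment s of the earlier groups *)
Definition Mprev (k : nat) (s : seq bool) : R := if k is 0 then 0 else mahal s.

Definition threshold (k : nat) (s : seq bool) : \bar R :=
  (((nth 0%N ns k)%:R / (cum k.+1)%:R)%:E *
   ncchi2_lower_quantile p ((cum k)%:R / (nth 0%N ns k)%:R * Mprev k s)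
     (svec k)^-1)%E.

Definition group_law (k : nat) (s b : seq bool) : R :=
  match insub b : option ((nth 0%N ns k).-tuple bool) with
  | Some bt => output_law s (threshold k s) gamma bt
  | None => 0
  end.

Definition prefix_prob (k : nat) (w : seq bool) : R :=
  \prod_(l < k) group_law l (take (cum l) w) (take (nth 0%N ns l) (drop (cum l) w)).

End SeqPSRR.

Definition tauhat (R : realType) (Y1 Y0 : nat -> R) (w : seq bool) : R :=
  let n := size w in
  2 / n%:R * \sum_(i < n) (nth false w i)%:R * Y1 i
  - 2 / n%:R * \sum_(i < n) (1 - (nth false w i)%:R) * Y0 i.

Definition tau (R : realType) (Y1 Y0 : nat -> R) (n : nat) : R :=
  (n%:R)^-1 * \sum_(i < n) (Y1 i - Y0 i).

From HB Require Import structures.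
From mathcomp Require Import all_boot all_order all_algebra.
From mathcomp Require Import all_classical all_reals all_analysis.
From mathcomp Require Import ring lra zify.
Import Order.TTheory GRing.Theory Num.Theory.
Import numFieldNormedType.Exports.
Local Open Scope ring_scope.
Set Implicit Arguments. Unset Strict Implicit.

(* The proof is a symmetry argument.  Complementing an assignment
   (swapping treatment and control for every unit) leaves the Mahalanobis
   distance unchanged: the number of treated units nt becomes m - nt, the
   factor nt (1 - nt/m) is symmetric, and the difference of group means only
   changes sign inside a quadratic form.  Since every group has n_k/2 treated
   units, the uniform initial law, the pair-switching transition kernel and
   hence the law of the output of each group are invariant under
   complementation; so is the joint law of the whole assignment.
   Finally  tauhat W + tauhat (complement W) = 2 tau  for every W, and the joint
   law has total mass 1 because every group terminates almost surely.
   Averaging over the involution W |-> complement W gives E(tauhat) = tau. *)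

Lemma quad_formN (R : comPzRingType) p (D : 'rV[R]_p) (M : 'M[R]_p) :
  (- D) *m M *m (- D)^T = D *m M *m D^T.
Proof. by rewrite linearN /= mulmxN !mulNmx opprK. Qed.

Lemma count_map_negb (s : seq bool) :
  count id (map negb s) = (size s - count id s)%N.
Proof. by rewrite count_map -(count_predC id s) addKn. Qed.

Section Complement.
Variables (R : realType) (p : nat) (X : nat -> 'rV[R]_p).

Lemma mahal_negb (s : seq bool) : mahal X (map negb s) = mahal X s.
Proof.
rewrite /mahal size_map count_map_negb.
set m := size s; set nt := count id s.
have ntm : (nt <= m)%N by rewrite count_size.
have sum_treated : \sum_(i < m | nth false (map negb s) i) X i
                 = \sum_(i < m | ~~ nth false s i) X i.
  by apply: eq_bigl => i; rewrite (nth_map false).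
have sum_control : \sum_(i < m | ~~ nth false (map negb s) i) X i
                 = \sum_(i < m | nth false s i) X i.
  by apply: eq_bigl => i; rewrite (nth_map false) // negbK.
rewrite sum_treated sum_control subKn //.
set A := (_ *: \sum_(i < m | ~~ _) X i); set B := (_ *: \sum_(i < m | nth _ _ _) X i).
rewrite -[A - B]opprB quad_formN; congr (_ * _).
have [m0|mn0] := eqVneq m 0%N.
  have nt0 : nt = 0%N by apply/eqP; rewrite -leqn0 -m0.
  by rewrite m0 nt0 sub0n !mul0r.
by rewrite natrB //; field; rewrite pnatr_eq0.
Qed.

Definition negt m (b : m.-tuple bool) : m.-tuple bool := map_tuple negb b.

Lemma negtK m : involutive (@negt m).
Proof. by move=> b; apply: eq_from_tnth => k; rewrite !tnth_map negbK. Qed.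

Lemma negt_inj m : injective (@negt m).
Proof. exact: inv_inj (@negtK m). Qed.

Lemma tnth_negt m (b : m.-tuple bool) k : tnth (negt b) k = ~~ tnth b k.
Proof. exact: tnth_map. Qed.

Lemma count_negt m (b : m.-tuple bool) : count id (negt b) = (m - count id b)%N.
Proof. by rewrite count_map_negb size_tuple. Qed.

Lemma Mk_negt s m (b : m.-tuple bool) : Mk X (map negb s) (negt b) = Mk X s b.
Proof. by rewrite /Mk /= -map_cat mahal_negb. Qed.

Lemma stopped_negt s a m (b : m.-tuple bool) :
  stopped X (map negb s) a (negt b) = stopped X s a b.
Proof. by rewrite /stopped Mk_negt. Qed.

(* Switching the pair (i, j) in the complement is complementing the switch of
   the pair (j, i): the roles of treated and control unit are exchanged. *)
Lemma swapb_negt m (b : m.-tuple bool) (i j : 'I_m) :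
  i != j -> swapb (negt b) i j = negt (swapb b j i).
Proof.
move=> ij; apply: eq_from_tnth => k; rewrite !tnth_map !tnth_ord_tuple.
case: (eqVneq k i) => [->|_]; first by rewrite (negbTE ij).
by case: (eqVneq k j).
Qed.

(* The pair-switching kernel commutes with complementation: reindex the
   proposals by exchanging the chosen treated and control units. *)
Lemma trans_negt s a g m (c b : m.-tuple bool) :
  trans X (map negb s) a g (negt c) (negt b) = trans X s a g c b.
Proof.
rewrite /trans stopped_negt !(inj_eq (@negt_inj m)).
case: (stopped X s a c); first by [].
have cm : (count id c <= m)%N by rewrite -{2}(size_tuple c) count_size.
rewrite count_negt (subKn cm) mulnC.
rewrite [LHS](@exchange_big _ _ _ _ _ (index_enum 'I_m) (index_enum 'I_m)).
apply: eq_big => [j|j hj]; first by rewrite tnth_negt negbK.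
apply: eq_big => [i|i hi]; first by rewrite tnth_negt.
rewrite tnth_negt negbK in hj; rewrite tnth_negt in hi.
have ij : i != j by apply: contraNneq hi => ->.
by rewrite (swapb_negt _ ij) !Mk_negt (inj_eq (@negt_inj m)).
Qed.

(* With m/2 treated units out of an even m, complementing preserves the
   balance constraint, so the uniform initial law is invariant. *)
Lemma init_negt m (b : m.-tuple bool) : ~~ odd m -> init R (negt b) = init R b.
Proof.
move=> ev; rewrite /init count_negt.
have cm : (count id b <= m)%N by rewrite -{2}(size_tuple b) count_size.
have hm := odd_double_half m; rewrite (negbTE ev) add0n -addnn in hm.
suff -> : ((m - count id b)%N == m./2) = (count id b == m./2) by [].
by apply/eqP/eqP => h; lia.
Qed.

Lemma law_at_negt s a g m t (b : m.-tuple bool) : ~~ odd m ->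
  law_at X (map negb s) a g t (negt b) = law_at X s a g t b.
Proof.
move=> ev; elim: t b => [|t IH] b; first exact: init_negt.
rewrite [LHS]/= [RHS]/= [LHS](reindex_inj (@negt_inj m)).
by apply: eq_bigr => c _; rewrite IH trans_negt.
Qed.

Lemma output_law_negt s a g m (b : m.-tuple bool) : ~~ odd m ->
  output_law X (map negb s) a g (negt b) = output_law X s a g b.
Proof.
move=> ev; rewrite /output_law; congr (limn _); apply: funext => t.
by rewrite stopped_negt law_at_negt.
Qed.

Variables (ns : seq nat) (sv : nat -> R) (g : R).

Lemma threshold_negb k s : threshold X ns sv k (map negb s) = threshold X ns sv k s.
Proof. by case: k => [|k]; rewrite /threshold /Mprev ?mahal_negb. Qed.

Lemma group_law_negb k s b : ~~ odd (nth 0%N ns k) ->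
  group_law X ns sv g k (map negb s) (map negb b) = group_law X ns sv g k s b.
Proof.
move=> ev; rewrite /group_law threshold_negb.
case: (insubP _ b) => [bt hb eb|hb]; case: (insubP _ (map negb b)) => [bt' hb' eb'|hb'].
- have -> : bt' = negt bt by apply: val_inj; rewrite eb' /negt /= eb.
  exact: output_law_negt.
- by rewrite size_map hb in hb'.
- by rewrite size_map in hb'; rewrite hb' in hb.
- by [].
Qed.

Lemma prefix_prob_negb k w : (forall l, ~~ odd (nth 0%N ns l)) ->
  prefix_prob X ns sv g k (map negb w) = prefix_prob X ns sv g k w.
Proof.
move=> ev; apply: eq_bigr => l _.
by rewrite -map_take -map_drop -map_take group_law_negb.
Qed.

End Complement.

Lemma limn_ge0 (R : realType) (u : nat -> R) : (forall n, 0 <= u n) -> 0 <= limn u.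
Proof.
move=> u_ge0; have [cu|du] := pselect (cvgn u); last by rewrite dvgP.
by apply: limr_ge => //; apply: nearW.
Qed.

Section Nonnegativity.
Variables (R : realType) (p : nat) (X : nat -> 'rV[R]_p).
Variables (ns : seq nat) (sv : nat -> R) (g : R).

Lemma acc_prob_01 (x y : R) : 0 <= acc_prob g x y <= 1.
Proof.
rewrite /acc_prob; case: ifP => _; first by rewrite ler01 lexx.
by rewrite le_min ge_min lexx orbT powR_ge0 ler01.
Qed.

Lemma trans_ge0 s a m (c b : m.-tuple bool) : 0 <= trans X s a g c b.
Proof.
rewrite /trans; case: stopped; first by rewrite ler0n.
apply: sumr_ge0 => i _; apply: sumr_ge0 => j _.
have /andP[acc_ge0 acc_le1] := acc_prob_01 (Mk X s c) (Mk X s (swapb c i j)).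
apply: mulr_ge0; first by rewrite invr_ge0 ler0n.
by apply: addr_ge0; apply: mulr_ge0; rewrite ?ler0n ?subr_ge0.
Qed.

Lemma law_at_ge0 s a m t (b : m.-tuple bool) : 0 <= law_at X s a g t b.
Proof.
elim: t b => [|t IH] b /=; first by rewrite divr_ge0 ?ler0n.
by apply: sumr_ge0 => c _; rewrite mulr_ge0 ?IH ?trans_ge0.
Qed.

Lemma group_law_ge0 k s b : 0 <= group_law X ns sv g k s b.
Proof.
rewrite /group_law; case: insubP => [bt _ _|_]; last by [].
by apply: limn_ge0 => t; rewrite mulr_ge0 ?ler0n ?law_at_ge0.
Qed.

Lemma prefix_prob_ge0 k w : 0 <= prefix_prob X ns sv g k w.
Proof. by apply: prodr_ge0 => l _; exact: group_law_ge0. Qed.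

End Nonnegativity.

Section TupleSums.
Variable R : realType.

Lemma sum_tuple_eq m m' (e : m = m') (f : seq bool -> R) :
  \sum_(w : m.-tuple bool) f w = \sum_(w : m'.-tuple bool) f w.
Proof. by case: m' / e. Qed.

Lemma sum_tuple0 (f : seq bool -> R) : \sum_(w : 0.-tuple bool) f w = f [::].
Proof.
rewrite (big_pred1 [tuple]) // => w /=.
by apply/esym/eqP/val_inj; rewrite /= (size0nil (size_tuple w)).
Qed.

Lemma sum_tuple_cat a b (f : seq bool -> R) :
  \sum_(w : (a + b).-tuple bool) f w =
  \sum_(s : a.-tuple bool) \sum_(t : b.-tuple bool) f (s ++ t).
Proof.
rewrite pair_big /= (reindex (fun st => cat_tuple st.1 st.2)) //=.
have take_ok (w : (a + b).-tuple bool) : size (take a w) == a.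
  by rewrite size_takel // size_tuple leq_addr.
have drop_ok (w : (a + b).-tuple bool) : size (drop a w) == b.
  by rewrite size_drop size_tuple addKn.
exists (fun w => (insubd (nseq_tuple a false) (take a w),
                  insubd (nseq_tuple b false) (drop a w))) => [[s t] _|w _] /=.
  by rewrite take_size_cat ?drop_size_cat ?size_tuple // !valKd.
apply: val_inj; rewrite /= !insubdK ?cat_take_drop //.
all: by rewrite -topredE /= ?take_ok ?drop_ok.
Qed.

End TupleSums.

Lemma cumS (ns : seq nat) k : cum ns k.+1 = (cum ns k + nth 0%N ns k)%N.
Proof. by rewrite /cum big_ord_recr. Qed.

Lemma cum_mono (ns : seq nat) i j : (i <= j)%N -> (cum ns i <= cum ns j)%N.
Proof.
elim: j => [|j IH]; first by rewrite leqn0 => /eqP ->.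
rewrite leq_eqVlt => /orP[/eqP -> //|]; rewrite ltnS => /IH h.
by rewrite cumS (leq_trans h) ?leq_addr.
Qed.

Section JointLaw.
Variables (R : realType) (p : nat) (X : nat -> 'rV[R]_p).
Variables (ns : seq nat) (sv : nat -> R) (g : R).

(* Appending group k to an assignment of the first k groups only adds the
   factor for group k: earlier factors read only the prefix s. *)
Lemma prefix_prob_cat k (s t : seq bool) : size s = cum ns k ->
  prefix_prob X ns sv g k.+1 (s ++ t) =
  prefix_prob X ns sv g k s * group_law X ns sv g k s (take (nth 0%N ns k) t).
Proof.
move=> hs; rewrite /prefix_prob big_ord_recr (take_size_cat _ hs) (drop_size_cat _ hs).
apply: (f_equal2 (@GRing.mul R)); last by [].
apply: eq_bigr => l _.
have hl : (cum ns l.+1 <= cum ns k)%N by apply: cum_mono; exact: ltn_ord.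
have hl' : (cum ns l <= size s)%N by rewrite hs (leq_trans _ hl) // cumS leq_addr.
rewrite (takel_cat _ hl') drop_cat; case: ltnP => hlt.
  have hsz : (nth 0%N ns l <= size (drop (cum ns l) s))%N.
    by rewrite size_drop hs leq_subRL -?cumS // -hs.
  by rewrite (takel_cat _ hsz).
have last_before : cum ns l = size s by apply/eqP; rewrite eqn_leq hl' hlt.
have empty_group : nth 0%N ns l = 0%N.
  by move: hl; rewrite cumS -hs -last_before; lia.
by rewrite empty_group !take0.
Qed.

Lemma prefix_prob_mass k :
  (forall k, (k < size ns)%N ->
     forall s : (cum ns k).-tuple bool,
       0 < prefix_prob X ns sv g k s ->
       \sum_(b : (nth 0%N ns k).-tuple bool)
          output_law X s (threshold X ns sv k s) g b = 1) ->
  (k <= size ns)%N ->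
  \sum_(w : (cum ns k).-tuple bool) prefix_prob X ns sv g k w = 1.
Proof.
move=> terminates; elim: k => [_|k IH hk].
  have cum0 : cum ns 0 = 0%N by rewrite /cum big_ord0.
  by rewrite (sum_tuple_eq cum0 (prefix_prob X ns sv g 0)) sum_tuple0 /prefix_prob big_ord0.
rewrite (sum_tuple_eq (cumS ns k) (prefix_prob X ns sv g k.+1)) sum_tuple_cat.
rewrite -[RHS](IH (ltnW hk)); apply: eq_bigr => s _.
under eq_bigr => t _ do
  rewrite (prefix_prob_cat _ (size_tuple s)) -{1}(size_tuple t) take_size /group_law valK.
rewrite -mulr_sumr.
have [<-|hpos] := eqVneq 0 (prefix_prob X ns sv g k s); first by rewrite mul0r.
have hpos' : 0 < prefix_prob X ns sv g k s by rewrite lt_def eq_sym hpos prefix_prob_ge0.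
by rewrite (terminates k hk s hpos') mulr1.
Qed.

End JointLaw.

Lemma tauhat_negb (R : realType) (Y1 Y0 : nat -> R) (w : seq bool) :
  tauhat Y1 Y0 w + tauhat Y1 Y0 (map negb w) = 2 * tau Y1 Y0 (size w).
Proof.
rewrite /tauhat /tau size_map; set n := size w.
have negb_nat (b : bool) : (~~ b)%:R = 1 - b%:R :> R.
  by case: b; rewrite ?subrr ?subr0.
have treated_complement (Y : nat -> R) :
    \sum_(i < n) (nth false (map negb w) i)%:R * Y i
  = \sum_(i < n) (1 - (nth false w i)%:R) * Y i.
  by apply: eq_bigr => i _; rewrite (nth_map false) // negb_nat.
have control_complement (Y : nat -> R) :
    \sum_(i < n) (1 - (nth false (map negb w) i)%:R) * Y i
  = \sum_(i < n) (nth false w i)%:R * Y i.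
  by apply: eq_bigr => i _; rewrite (nth_map false) // negb_nat; ring.
have split_sum (Y : nat -> R) :
    \sum_(i < n) Y i = \sum_(i < n) (nth false w i)%:R * Y i
                     + \sum_(i < n) (1 - (nth false w i)%:R) * Y i.
  by rewrite -big_split; apply: eq_bigr => i _ /=; ring.
rewrite treated_complement control_complement sumrB (split_sum Y1) (split_sum Y0).
ring.
Qed.

Lemma expectation_invariant_involution (R : realFieldType) (T : finType)
    (f : T -> T) (P h : T -> R) (c : R) :
  involutive f -> (forall x, P (f x) = P x) -> \sum_x P x = 1 ->
  (forall x, h x + h (f x) = 2 * c) ->
  \sum_x P x * h x = c.
Proof.
move=> fK Pf mass hf.
have sym : \sum_x P x * h x = \sum_x P x * h (f x).
  by rewrite [LHS](reindex_inj (inv_inj fK)); apply: eq_bigr => x _; rewrite Pf.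
have : \sum_x P x * h x + \sum_x P x * h x = 2 * c.
  rewrite {2}sym -big_split /=.
  under eq_bigr => x _ do rewrite -mulrDr hf.
  by rewrite -mulr_suml mass mul1r.
lra.
Qed.

Theorem theorem4 (R : realType) (p : nat) (X : nat -> 'rV[R]_p)
  (ns : seq nat) (svec : nat -> R) (gamma : R) (Y1 Y0 : nat -> R) :
  (forall k, (k < size ns)%N -> (0 < nth 0%N ns k)%N /\ ~~ odd (nth 0%N ns k)) ->
  (forall k, (k < size ns)%N -> cov X (cum ns k.+1) \in unitmx) ->
  (forall k, (k < size ns)%N -> 0 < svec k) ->
  0 <= gamma ->
  (* SeqPSRR terminates almost surely in every group *)
  (forall k, (k < size ns)%N ->
     forall s : (cum ns k).-tuple bool,
       0 < prefix_prob X ns svec gamma k s ->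
       \sum_(b : (nth 0%N ns k).-tuple bool)
          output_law X s (threshold X ns svec k s) gamma b = 1) ->
  \sum_(w : (cum ns (size ns)).-tuple bool)
     prefix_prob X ns svec gamma (size ns) w * tauhat Y1 Y0 w
  = tau Y1 Y0 (cum ns (size ns)).
Proof.
move=> sizes _ _ _ terminates.
have even_groups l : ~~ odd (nth 0%N ns l).
  have [hl|hl] := ltnP l (size ns); first by case: (sizes l hl).
  by rewrite nth_default.
apply: (expectation_invariant_involution (@negtK _)).
- by move=> w; exact: prefix_prob_negb.
- exact: prefix_prob_mass terminates (leqnn _).
- by move=> w; rewrite tauhat_negb size_tuple.
Qed.
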